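(* Let $G$ be an elementary abelian $2$-group (an $\mathbb{F}_2$-vector space) and let $T\subseteq G$ be a generating subset of $G$ with $0\in T$. Let $\mathcal{U}$ be the group with presentation $$\mathcal{U}=\big\langle (t^{\mathcal U})_{t\in T}\;\big|\;(t^{\mathcal U})^2=1,\ t^{\mathcal U}s^{\mathcal U}(t^{\mathcal U})^{-1}=(2t-s)^{\mathcal U}\text{ for all } s,t\in T\big\rangle,$$ let $\mathcal{W}$ be the subgroup generated by $\{(0,t,-1)\mid t\in T\}$ of the group $(G\wedge G)\times G\times\{1,-1\}$ with multiplication $(l,g,v)(l',g',v')=(l+l'+g\wedge(vg'),\,g+vg',\,vv')$, and let $\phi:\mathcal U\to\mathcal W$ be the group homomorphism determined by $t^{\mathcal U}\mapsto(0,t,-1)$. Then: (1) $\phi$ is injective if $T\setminus\{0\}$ is a basis of $G$; (2) if $G$ has finite dimension $n$ over $\mathbb{F}_2$ and $|T\setminus\{0\}|>\frac{n(n+1)}{2}$, then $\phi$ is not injective; (3) if $T=G$, then $\phi$ is an isomorphism if and only if $\dim_{\mathbb{F}_2}(G)\le 2$.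
   Context: Since $2s=0$ in $G$, the relation in $\mathcal U$ reads $t^{\mathcal U}s^{\mathcal U}(t^{\mathcal U})^{-1}=s^{\mathcal U}$. The homomorphism $\phi$ exists since the elements $(0,t,-1)$ satisfy the defining relations of $\mathcal U$, and it is surjective by construction. *)

From HB Require Import structures.
From mathcomp Require Import all_boot all_order all_algebra.
Set Implicit Arguments. Unset Strict Implicit. Unset Printing Implicit Defensive.
Import GRing.Theory.
Local Open Scope ring_scope.

Section Defs.
Variable G : zmodType.

Definition elem_abelian2 : Prop := forall x : G, x + x = 0.

Definition generates (B : {pred G}) : Prop :=
  forall g : G, exists s : seq G, all (fun x => x \in B) s /\ g = \sum_(x <- s) x.

Definition f2_independent (B : {pred G}) : Prop :=
  forall s : seq G, uniq s -> all (fun x => x \in B) s ->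
    \sum_(x <- s) x = 0 -> s = [::].

Definition is_basis (B : {pred G}) : Prop := f2_independent B /\ generates B.

Definition has_dim (n : nat) : Prop :=
  exists b : seq G, [/\ uniq b, size b = n & is_basis (fun x => x \in b)].

(* ---------- The exterior square G /\ G ----------
   An element of G /\ G is represented by a formal sum  sum_i g_i /\ h_i
   (a list of pairs); such a formal sum is zero in G /\ G iff every
   alternating Z-bilinear map out of G x G vanishes on it
   (universal property of the exterior square). *)
Definition wedge_zero (l : seq (G * G)) : Prop :=
  forall (A : zmodType) (b : G -> G -> A),
    (forall h, {morph b^~ h : x y / x + y}) ->
    (forall g, {morph b g : x y / x + y}) ->
    (forall g, b g g = 0) ->
    \sum_(p <- l) b p.1 p.2 = 0.

Definition wneg (l : seq (G * G)) : seq (G * G) := map (fun p => (- p.1, p.2)) l.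

(* ---------- The group (G /\ G) x G x {1,-1} ----------
   the sign v is encoded as a bool: true = -1, false = 1 *)
Definition Wt := (seq (G * G) * G * bool)%type.

Definition sact (v : bool) (g : G) : G := if v then - g else g.

Definition wmul (x y : Wt) : Wt :=
  let: (l, g, v) := x in let: (l', g', v') := y in
  (l ++ l' ++ [:: (g, sact v g')], g + sact v g', addb v v').

Definition wone : Wt := ([::], 0, false).

Definition winv (x : Wt) : Wt :=
  let: (l, g, v) := x in (wneg l ++ [:: (g, g)], - sact v g, v).

Definition weq (x y : Wt) : Prop :=
  x.1.2 = y.1.2 /\ x.2 = y.2 /\ wedge_zero (x.1.1 ++ wneg y.1.1).

(* ---------- The presented group U ----------
   Elements of U are words in the letters t^U (t in T) and their inverses:
   a letter (t, false) is t^U, (t, true) is (t^U)^-1.  Two words are equal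
   in U iff they are related by the congruence generated by free
   cancellation and the defining relations. *)
Definition word := seq (G * bool).

Definition word_in (T : {pred G}) (w : word) : bool := all (fun a => a.1 \in T) w.

Inductive ustep (T : {pred G}) : word -> word -> Prop :=
| us_free t b : t \in T -> ustep T [:: (t, b); (t, ~~ b)] [::]
| us_sq t : t \in T -> ustep T [:: (t, false); (t, false)] [::]
| us_conj t s : t \in T -> s \in T ->
    ustep T [:: (t, false); (s, false); (t, true)] [:: (t *+ 2 - s, false)].

Inductive ueq (T : {pred G}) : word -> word -> Prop :=
| ueq_step u v a c : ustep T u v -> ueq T (a ++ u ++ c) (a ++ v ++ c)
| ueq_refl u : ueq T u u
| ueq_sym u v : ueq T u v -> ueq T v u
| ueq_trans u v w : ueq T u v -> ueq T v w -> ueq T u w.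

Definition phi_gen (t : G) : Wt := ([::], t, true).

Definition phi_letter (a : G * bool) : Wt :=
  if a.2 then winv (phi_gen a.1) else phi_gen a.1.

Definition phiw (w : word) : Wt := foldr (fun a acc => wmul (phi_letter a) acc) wone w.

Definition phi_injective (T : {pred G}) : Prop :=
  forall u v : word, word_in T u -> word_in T v ->
    weq (phiw u) (phiw v) -> ueq T u v.

End Defs.

From HB Require Import structures.
From mathcomp Require Import all_boot all_order all_algebra zify.
From Stdlib Require Import Classical ClassicalEpsilon.
Import GRing.Theory.

Set Implicit Arguments.
Unset Strict Implicit.
Unset Printing Implicit Defensive.
Local Open Scope ring_scope.

(* Since 2s = 0 in G, the relations of U say that the generators are commuting
   involutions, so a word of U is determined by the parities of its letter multiplicities.
   The image of a word t_1 ... t_m in W is (sum_(i<j) t_i /\ t_j, sum_i t_i, (-1)^m).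
   In coordinates x_k with respect to an F_2-basis e_1, ..., e_n, its G- and G /\ G-parts
   are determined by the parities N_kl (k <= l) of the number of letters t_i with
   (t_i)_k = (t_i)_l = 1, since sum_(i<j) t_i /\ t_j =
   sum_(k<l) (N_kk N_ll + N_kl) e_k /\ e_l; conversely the alternating forms
   x_k y_l + x_l y_k recover N_kl.
   (1) If T \ {0} is independent, the sum of the letters gives the parity of every
       nonzero letter, and m mod 2 that of the letter 0.
   (2) The words using each letter of {0} u s at most once are 2^(|s|+1) distinct elements
       of U with at most 2^(1 + n(n+1)/2) images.
   (3) In dimension >= 3, apply (2) to the 7 nonzero vectors of a 3-dimensional subspace.
       In dimension <= 1, T \ {0} is a basis.  In dimension 2, inclusion-exclusion recovers
       the parity of each letter from m, N_00, N_11 and N_01. *)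

Lemma morph_add0 (U V : zmodType) (f : U -> V) : {morph f : x y / x + y} -> f 0 = 0.
Proof. by move=> fD; apply: (addrI (f 0)); rewrite -fD !addr0. Qed.

Lemma morph_addN (U V : zmodType) (f : U -> V) :
  {morph f : x y / x + y} -> {morph f : x / - x}.
Proof. by move=> fD x; apply/eqP; rewrite -addr_eq0 -fD addNr (morph_add0 fD). Qed.

Lemma sum_count_mem (I : eqType) (V : nmodType) (r s : seq I) (F : I -> V) :
  uniq r -> {subset s <= r} -> \sum_(x <- s) F x = \sum_(x <- r) F x *+ count_mem x s.
Proof.
move=> r_uniq; elim: s => [|a s IH] /= s_r.
  by rewrite big_nil big1_seq // => x _; rewrite mulr0n.
have a_r : a \in r by apply: s_r; rewrite mem_head.
rewrite big_cons IH => [|x xs]; last by apply: s_r; rewrite inE xs orbT.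
under [in RHS]eq_bigr do rewrite mulrnDr.
rewrite big_split /=; congr (_ + _).
rewrite (bigD1_seq a) //= eqxx mulr1n big1 ?addr0 // => x /negbTE.
by rewrite eq_sym => ->; rewrite mulr0n.
Qed.

Lemma count_mem_nth_mask (T : eqType) (x0 : T) (r : seq T) (m : bitseq) k :
  uniq r -> (k < size r)%N -> count_mem (nth x0 r k) (mask m r) = nth false m k.
Proof.
elim: r m k => [|z r IH] [|b m] k //= /andP[zr r_uniq] kr; first by rewrite nth_nil.
have zm : z \notin mask m r by apply: contra zr; apply: mem_mask.
case: k kr => [|k] kr /=; first by case: b; rewrite /= ?eqxx (count_memPn zm).
have /negbTE zk : z != nth x0 r k by apply: contraNneq zr => ->; rewrite mem_nth.
by case: b; rewrite /= IH // ?zk.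
Qed.

Lemma sum_nat_square (A : zmodType) n (f : nat -> nat -> A) :
  \sum_(0 <= k < n) \sum_(0 <= l < n) f k l =
  \sum_(0 <= k < n) f k k +
  \sum_(0 <= k < n) \sum_(0 <= l < n) (if (k < l)%N then f k l + f l k else 0).
Proof.
elim: n => [|n IH]; first by rewrite !big_nil addr0.
rewrite big_nat_recr //=.
under eq_bigr do rewrite big_nat_recr //=.
rewrite big_split /= IH.
rewrite [\sum_(0 <= k < n.+1) f k k]big_nat_recr //=.
rewrite [X in _ = _ + X]big_nat_recr //=.
under [X in _ = _ + (X + _)]eq_bigr do rewrite big_nat_recr //=.
rewrite big_split /=.
have -> : \sum_(0 <= l < n.+1) (if (n < l)%N then f n l + f l n else 0) = 0.
  rewrite big1_seq // => l /andP[_]; rewrite mem_index_iota ltnS => /andP[_ hl].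
  by rewrite ltnNge hl.
have -> : \sum_(0 <= i < n) (if (i < n)%N then f i n + f n i else 0) =
          \sum_(0 <= i < n) (f i n + f n i).
  by apply: eq_big_nat => i /andP[_ ->].
rewrite addr0 big_split /= [\sum_(0 <= l < n.+1) f n l]big_nat_recr //=.
by rewrite -!addrA; congr (_ + _); rewrite [RHS]addrC -!addrA.
Qed.

Lemma sum_nat_delta (V : nmodType) j n (F : nat -> V) : (j < n)%N ->
  (forall i, (i < n)%N -> i != j -> F i = 0) -> \sum_(0 <= i < n) F i = F j.
Proof.
move=> jn F0; rewrite (bigD1_seq j) ?mem_index_iota ?iota_uniq //= big1_seq ?addr0 //.
by move=> i /andP[ij]; rewrite mem_index_iota => /andP[_ i_n]; apply: F0.
Qed.

Lemma odd_size_count_mem (I : eqType) (s s' : seq I) :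
  (forall x, odd (count_mem x s) = odd (count_mem x s')) -> odd (size s) = odd (size s').
Proof.
move=> same_count; pose r := undup (s ++ s').
have size_r t : {subset t <= r} -> size t = (\sum_(x <- r) count_mem x t)%N.
  move=> tr; rewrite -sum1_size (sum_count_mem _ (undup_uniq _) tr).
  by apply: eq_bigr => x _; elim: (count_mem x t) => // k IH; rewrite mulrS IH.
rewrite !size_r => [|x xs|x xs]; last 2 first.
- by rewrite mem_undup mem_cat xs orbT.
- by rewrite mem_undup mem_cat xs.
by clear size_r; elim: r => [|x r IH]; rewrite ?big_nil // !big_cons !oddD IH same_count.
Qed.

Lemma mulrn_addb (V : zmodType) (z : V) (p q : bool) :
  z + z = 0 -> z *+ p + z *+ q = z *+ (p (+) q).
Proof. by move=> zz; case: p; case: q; rewrite /= ?addr0 ?add0r. Qed.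

Lemma natr_addb_Z2 (p q : bool) : ((p (+) q)%:R : 'Z_2) = p%:R + q%:R.
Proof. by case: p; case: q; apply/val_inj. Qed.

Lemma natr_Z2_inj (p q : bool) : (p%:R : 'Z_2) = q%:R -> p = q.
Proof. by case: p; case: q => // /(congr1 val). Qed.

Lemma card_ordered_pairs n :
  #|{: {p : 'I_n * 'I_n | (p.1 <= p.2)%N}}| = ((n * n.+1) %/ 2)%N.
Proof.
have tri m : ((\sum_(0 <= i < m) \sum_(0 <= j < m) (i <= j)) * 2 = m * m.+1)%N.
  elim: m => [|m IH]; first by rewrite big_nil.
  rewrite big_nat_recr //=; under eq_bigr do rewrite big_nat_recr //=.
  rewrite big_split /=.
  have -> : (\sum_(0 <= i < m) (i <= m) = m)%N.
    rewrite (eq_big_nat _ _ (F2 := fun => 1%N)) => [|i /andP[_ /ltnW ->]] //.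
    by rewrite sum_nat_const_nat muln1 subn0.
  have -> : (\sum_(0 <= j < m.+1) (m <= j) = 1)%N.
    rewrite big_nat_recr //= leqnn big1_seq ?add0n // => j /andP[_].
    by rewrite mem_index_iota => /andP[_ jm]; rewrite leqNgt jm.
  by lia.
rewrite card_sig -sum1_card big_mkcond /=.
rewrite -(pair_bigA _ (fun i j : 'I_n => if (i <= j)%N then 1 else 0)) /=.
rewrite -tri mulnK // big_mkord; apply: eq_bigr => i _.
by rewrite big_mkord; apply: eq_bigr => j _; case: ifP.
Qed.

(* Inclusion-exclusion modulo 2. *)
Lemma odd_count_andeq (A : Type) (p q : pred A) c d (w : seq A) :
  odd (count (fun a => (p a == c) && (q a == d)) w) =
  odd (count (fun a => p a && q a) w) (+) (~~ d && odd (count p w))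
  (+) (~~ c && odd (count q w)) (+) (~~ c && ~~ d && odd (size w)).
Proof.
elim: w => [|a w IH] /=; first by case: c; case: d.
rewrite !oddD {}IH !oddb.
by case: (p a); case: (q a); case: c; case: d; do 4!case: (odd _).
Qed.

Section ElemAbelian2.
Variable G : zmodType.
Hypothesis hG : elem_abelian2 G.

Lemma oppr_char2 (x : G) : - x = x.
Proof. by apply/eqP; rewrite eq_sym -addr_eq0 hG. Qed.

Lemma mulrn_char2 (x : G) n : x *+ n = x *+ odd n.
Proof.
elim: n => [|n IH] //; rewrite mulrS IH /=.
by case: (odd n); rewrite /= ?hG ?addr0.
Qed.

Lemma reflection_char2 (t s : G) : t *+ 2 - s = s.
Proof. by rewrite mulr2n hG sub0r oppr_char2. Qed.

(** * The word problem in U *)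

Definition letter_count (x : G) (w : word G) : nat := count_mem x (map fst w).

Section WordProblem.
Variable T : {pred G}.

Lemma ueq_ctx a c u v : ueq T u v -> ueq T (a ++ u ++ c) (a ++ v ++ c).
Proof.
elim=> [u' v' a' c' st | u' | u' v' _ IH | u' v' w' _ IH1 _ IH2].
- have := ueq_step (a ++ a') (c' ++ c) st.
  by rewrite !catA -!(catA a) -!catA.
- exact: ueq_refl.
- exact: ueq_sym.
- exact: ueq_trans IH2.
Qed.
Arguments ueq_ctx a c [u v].

Lemma ueq_cons x u v : ueq T u v -> ueq T (x :: u) (x :: v).
Proof. by move/(ueq_ctx [:: x] [::]); rewrite !cats0. Qed.

Lemma ueq_tail u v w : ueq T u v -> ueq T (u ++ w) (v ++ w).
Proof. exact: (ueq_ctx [::] w). Qed.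
Arguments ueq_tail : clear implicits.

Lemma ueq_letter_inv t b w : t \in T -> ueq T ((t, b) :: w) ((t, false) :: w).
Proof.
move=> tT; case: b; last exact: ueq_refl.
apply: (ueq_tail [:: (t, true)] [:: (t, false)] w).
apply: ueq_trans (ueq_sym (ueq_step [::] [:: (t, true)] (us_sq tT))) _.
by have := ueq_step [:: (t, false)] [::] (us_free false tT); rewrite cats0.
Qed.

Lemma ueq_swap t s w : t \in T -> s \in T ->
  ueq T ((t, false) :: (s, false) :: w) ((s, false) :: (t, false) :: w).
Proof.
move=> tT sT.
apply: (ueq_tail [:: (t, false); (s, false)] [:: (s, false); (t, false)] w).
have := ueq_step [:: (t, false); (s, false)] [::] (us_free true tT); rewrite cats0.
move/ueq_sym/ueq_trans; apply.
by have := ueq_step [::] [:: (t, false)] (us_conj tT sT); rewrite reflection_char2.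
Qed.

Lemma ueq_letter_count u v : ueq T u v -> forall x, odd (letter_count x u) = odd (letter_count x v).
Proof.
elim=> [u' v' a c st | u' | u' v' _ IH | u' v' w' _ IH1 _ IH2] x; last 3 first.
- by [].
- by rewrite IH.
- by rewrite IH1 IH2.
rewrite /letter_count !map_cat !count_cat !oddD; congr (_ (+) (_ (+) _)).
case: st => [t b _ | t _ | t s _ _] /=; rewrite ?reflection_char2.
- by case: (t == x).
- by case: (t == x).
- by case: (t == x); case: (s == x).
Qed.

Lemma ueq_move_front w t : word_in T w -> t \in map fst w ->
  exists r, [/\ word_in T r, ueq T w ((t, false) :: r), size w = (size r).+1 &
     forall x, letter_count x w = (letter_count x r + (t == x))%N].
Proof.
elim: w => [|[a b] w IH] //= /andP[aT wT].
rewrite in_cons; case: eqP => [->|ne] /= tw.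
  exists w; split => //; first exact: ueq_letter_inv.
  by move=> x; rewrite /letter_count /= addnC.
have [r [rT e sz c]] := IH wT tw.
have tT : t \in T by case/mapP: tw => [[t' b'] hin ->]; exact: (allP wT _ hin).
exists ((a, false) :: r); split => //=; first by rewrite aT.
- apply: ueq_trans (ueq_cons (a, b) e) _.
  exact: ueq_trans (ueq_letter_inv _ _ aT) (ueq_swap _ aT tT).
- by rewrite sz.
- by move=> x; rewrite /letter_count /= -/(letter_count x w) c addnA.
Qed.

Lemma ueq_of_letter_count u v : word_in T u -> word_in T v ->
  (forall x, odd (letter_count x u) = odd (letter_count x v)) -> ueq T u v.
Proof.
have [n] := ubnP (size u + size v); elim: n u v => // n IH.
suff cons_case t b u' v : (size u' + size v < n)%N ->
    word_in T ((t, b) :: u') -> word_in T v ->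
    (forall x, odd (letter_count x ((t, b) :: u')) = odd (letter_count x v)) ->
    ueq T ((t, b) :: u') v.
  case=> [|[t b] u'] [|[s c] v'] //= sz uT vT par; first exact: ueq_refl.
  - by apply/ueq_sym/cons_case; rewrite ?addn0.
  - by apply: cons_case; rewrite //= uT.
  - by apply: cons_case; rewrite //= ?uT // addnS -ltnS.
move=> sz /= /andP[tT u'T] vT par.
have count_u x : letter_count x ((t, b) :: u') = ((t == x) + letter_count x u')%N by [].
apply: ueq_trans (ueq_letter_inv _ _ tT) _.
case tv : (t \in map fst v).
  have [r [rT e szv c]] := ueq_move_front vT tv.
  apply: ueq_trans _ (ueq_sym e); apply: ueq_cons; apply: IH => //.
    by move: sz; rewrite szv; lia.
  by move=> x; move: (par x); rewrite count_u c oddD [odd (_ + _)]oddD addbC => /addIb.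
have vt0 : letter_count t v = 0%N by apply/count_memPn; rewrite tv.
have tu : t \in map fst u'.
  move: (par t); rewrite count_u vt0 eqxx /= => h.
  by rewrite -has_pred1 has_count lt0n; apply/eqP => c0; move: h; rewrite /letter_count c0.
have [r [rT e szu c]] := ueq_move_front u'T tu.
apply: ueq_trans (ueq_cons _ e) _.
apply: ueq_trans (ueq_step [::] r (us_sq tT)) _.
apply: IH => //=; first by move: sz; rewrite szu; lia.
move=> x; rewrite -par count_u c addnC -addnA oddD [odd (_ + _)]oddD.
by case: (t == x); case: (odd _).
Qed.

End WordProblem.

(** * The image of a word in W *)

Definition letter_sum (w : word G) : G := \sum_(a <- w) a.1.

Lemma letter_sum_cons (a : G * bool) (w : word G) : letter_sum (a :: w) = a.1 + letter_sum w.
Proof. exact: big_cons. Qed.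

Lemma phiw_cons (a : G * bool) (w : word G) : phiw (a :: w) = wmul (phi_letter a) (phiw w).
Proof. by []. Qed.

Lemma phiw_sign (w : word G) : (phiw w).2 = odd (size w).
Proof.
elim: w => [|[t c] w IH] //; rewrite phiw_cons.
by case: (phiw w) IH => [[l g] v] /= ->; case: c.
Qed.

Lemma phiw_sum (w : word G) : (phiw w).1.2 = letter_sum w.
Proof.
elim: w => [|[t c] w IH]; first by rewrite /letter_sum big_nil.
rewrite phiw_cons letter_sum_cons; case: (phiw w) IH => [[l g] v] /= ->.
by case: c; case: v; rewrite /= ?oppr_char2 ?opprK.
Qed.

Definition alternating (A : zmodType) (b : G -> G -> A) : Prop :=
  [/\ forall h, {morph b^~ h : x y / x + y},
      forall g, {morph b g : x y / x + y} &
      forall g, b g g = 0].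

Section Alternating.
Variables (A : zmodType) (b : G -> G -> A).
Hypothesis b_alt : alternating b.

Lemma alt_addl y : {morph b^~ y : x x' / x + x'}.
Proof. by case: b_alt. Qed.

Lemma alt_addr x : {morph b x : y y' / y + y'}.
Proof. by case: b_alt. Qed.

Lemma alt_oppl x y : b (- x) y = - b x y.
Proof. exact: (morph_addN (alt_addl y)). Qed.

Lemma alt_suml I r (P : pred I) (F : I -> G) y :
  b (\sum_(i <- r | P i) F i) y = \sum_(i <- r | P i) b (F i) y.
Proof. exact: (big_morph _ (alt_addl y) (morph_add0 (alt_addl y))). Qed.

Lemma alt_sumr I r (P : pred I) (F : I -> G) x :
  b x (\sum_(i <- r | P i) F i) = \sum_(i <- r | P i) b x (F i).
Proof. exact: (big_morph _ (alt_addr x) (morph_add0 (alt_addr x))). Qed.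

Lemma alt_mulrnl x n y : b (x *+ n) y = b x y *+ n.
Proof.
elim: n => [|n IH]; first by rewrite !mulr0n (morph_add0 (alt_addl y)).
by rewrite !mulrS alt_addl IH.
Qed.

Lemma alt_mulrnr x n y : b x (y *+ n) = b x y *+ n.
Proof.
elim: n => [|n IH]; first by rewrite !mulr0n (morph_add0 (alt_addr x)).
by rewrite !mulrS alt_addr IH.
Qed.

Lemma alt_char2 x y : b x y + b x y = 0.
Proof. by rewrite -alt_addl hG (morph_add0 (alt_addl y)). Qed.

Lemma alt_sym x y : b y x = b x y.
Proof.
case: b_alt => bDl bDr b0; have := b0 (x + y).
rewrite bDl !bDr !b0 add0r addr0 => /eqP; rewrite addr_eq0 => /eqP ->.
by apply/eqP; rewrite -addr_eq0 alt_char2.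
Qed.

End Alternating.

Definition wedge_eval (A : zmodType) (b : G -> G -> A) (w : word G) : A :=
  \sum_(p <- (phiw w).1.1) b p.1 p.2.

Lemma wedge_eval_cons (A : zmodType) (b : G -> G -> A) a w : alternating b ->
  wedge_eval b (a :: w) = wedge_eval b w + b a.1 (letter_sum w).
Proof.
move=> b_alt; rewrite /wedge_eval phiw_cons -phiw_sum; case: (phiw w) => [[l g] v] /=.
case: a => t [] /=; rewrite ?big_cons big_cat /= big_cons big_nil addr0 ?opprK oppr_char2 //.
by case: b_alt => _ _ ->; rewrite add0r.
Qed.

Lemma weq_phiwP (u v : word G) : weq (phiw u) (phiw v) <->
  [/\ letter_sum u = letter_sum v, odd (size u) = odd (size v) &
      forall (A : zmodType) (b : G -> G -> A), alternating b -> wedge_eval b u = wedge_eval b v].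
Proof.
have wedge_diff (A : zmodType) (b : G -> G -> A) : alternating b ->
    \sum_(p <- (phiw u).1.1 ++ wneg (phiw v).1.1) b p.1 p.2 = wedge_eval b u - wedge_eval b v.
  move=> b_alt; rewrite /wedge_eval big_cat /= /wneg big_map -sumrN.
  by congr (_ + _); apply: eq_bigr => p _; rewrite /= alt_oppl.
rewrite /weq (phiw_sum u) (phiw_sum v) !phiw_sign; split.
  case=> -> [-> vanish]; split=> // A b b_alt; apply/eqP; rewrite -subr_eq0 -wedge_diff //.
  by case: b_alt => bDl bDr b0; apply/eqP/vanish.
case=> -> -> same_eval; do 2!split=> //; move=> A b bDl bDr b0.
by rewrite wedge_diff ?same_eval ?subrr.
Qed.

(** * Coordinates over F_2 *)

Lemma f2_independent_count_odd (B : {pred G}) (s s' : seq G) : f2_independent B ->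
  all (fun x => x \in B) s -> all (fun x => x \in B) s' ->
  \sum_(x <- s) x = \sum_(x <- s') x ->
  forall x, odd (count_mem x s) = odd (count_mem x s').
Proof.
move=> B_ind sB s'B eq_sum.
pose r := undup (s ++ s'); pose odd_diff z := odd (count_mem z s) != odd (count_mem z s').
have r_uniq : uniq r := undup_uniq _.
have s_r : {subset s <= r} by move=> x xs; rewrite mem_undup mem_cat xs.
have s'_r : {subset s' <= r} by move=> x xs; rewrite mem_undup mem_cat xs orbT.
have diff0 : \sum_(z <- filter odd_diff r) z = \sum_(x <- s) x - \sum_(x <- s') x.
  rewrite (sum_count_mem id r_uniq s_r) (sum_count_mem id r_uniq s'_r) -sumrB.
  rewrite big_filter big_mkcond; apply: eq_bigr => z _.
  rewrite /odd_diff (mulrn_char2 z (count_mem z s)) (mulrn_char2 z (count_mem z s')).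
  by do 2!case: (odd _); rewrite /= ?subrr ?subr0 ?sub0r ?oppr_char2.
rewrite eq_sum subrr in diff0.
have diff_nil : filter odd_diff r = [::].
  apply: B_ind diff0; first by rewrite filter_uniq.
  apply/allP => z; rewrite mem_filter mem_undup mem_cat => /andP[_ /orP[zs|zs]].
    exact: (allP sB).
  exact: (allP s'B).
move=> x; case xr : (x \in r).
  have : x \notin filter odd_diff r by rewrite diff_nil.
  by rewrite mem_filter xr andbT negbK => /eqP.
move/negbT: xr; rewrite mem_undup mem_cat negb_or => /andP[xs xs'].
by rewrite (count_memPn xs) (count_memPn xs').
Qed.

(* generates (fun x => x \in bs) is convertible to forall g, spanned bs g. *)
Definition spanned (bs : seq G) (g : G) : Prop :=
  exists s, all (fun x => x \in bs) s /\ g = \sum_(x <- s) x.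

Lemma spanned0 bs : spanned bs 0.
Proof. by exists [::]; rewrite big_nil. Qed.

Lemma spannedD bs x y : spanned bs x -> spanned bs y -> spanned bs (x + y).
Proof.
move=> [s [sbs ->]] [s' [s'bs ->]]; exists (s ++ s').
by rewrite all_cat sbs s'bs big_cat.
Qed.

Lemma spanned_mem bs x : x \in bs -> spanned bs x.
Proof. by move=> xbs; exists [:: x]; rewrite /= xbs big_seq1. Qed.

Definition span_rep (bs : seq G) (g : G) : seq G :=
  epsilon (inhabits [::]) (fun s => all (fun x => x \in bs) s /\ g = \sum_(x <- s) x).

(* Well defined by f2_independent_count_odd when bs is independent and g is spanned by bs;
   junk otherwise. *)
Definition coord (bs : seq G) (k : nat) (g : G) : bool :=
  odd (count_mem (nth 0 bs k) (span_rep bs g)).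

Section Coordinates.
Variable bs : seq G.
Hypotheses (bs_ind : f2_independent (fun x => x \in bs)) (bs_uniq : uniq bs).
Local Notation n := (size bs).
Local Notation e k := (nth 0 bs k).

Lemma coord_sum k s : all (fun x => x \in bs) s ->
  coord bs k (\sum_(x <- s) x) = odd (count_mem (e k) s).
Proof.
move=> sbs; have spanned_s : spanned bs (\sum_(x <- s) x) by exists s.
have [rep_bs rep_sum] := epsilon_spec (inhabits [::]) _ spanned_s.
by apply: (f2_independent_count_odd bs_ind) => //; rewrite -rep_sum.
Qed.

Lemma coord0 k : coord bs k 0 = false.
Proof. by have := @coord_sum k [::] isT; rewrite big_nil. Qed.

Lemma coordD k x y : spanned bs x -> spanned bs y ->
  coord bs k (x + y) = coord bs k x (+) coord bs k y.
Proof.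
move=> [s [sbs ->]] [s' [s'bs ->]].
by rewrite -big_cat !coord_sum ?all_cat ?sbs ?s'bs // count_cat oddD.
Qed.

Lemma coord_nth k j : (j < n)%N -> (k < n)%N -> coord bs k (e j) = (j == k).
Proof.
move=> jn kn; have := @coord_sum k [:: e j]; rewrite big_seq1 /= mem_nth // => -> //.
by rewrite addn0 nth_uniq //; case: (j == k).
Qed.

Lemma coord_expand g : spanned bs g -> g = \sum_(0 <= k < n) e k *+ coord bs k g.
Proof.
move=> [s [sbs ->]]; rewrite {1}(sum_count_mem id bs_uniq (allP sbs)) (big_nth 0).
by apply: eq_bigr => k _; rewrite coord_sum // [LHS]mulrn_char2.
Qed.

Lemma alt_coord_expand (A : zmodType) (b : G -> G -> A) x y : alternating b ->
  spanned bs x -> spanned bs y ->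
  b x y = \sum_(0 <= k < n) \sum_(0 <= l < n)
    (if (k < l)%N then b (e k) (e l) *+
       ((coord bs k x && coord bs l y) (+) (coord bs l x && coord bs k y)) else 0).
Proof.
move=> b_alt x_span y_span.
rewrite {1}(coord_expand x_span) {1}(coord_expand y_span) alt_suml //.
under eq_bigr do rewrite alt_mulrnl // alt_sumr // -sumrMnl.
under eq_bigr do under eq_bigr do rewrite alt_mulrnr // -mulrnA.
rewrite sum_nat_square big1 ?add0r => [|k _]; last first.
  by case: b_alt => _ _ ->; rewrite mul0rn.
apply: eq_bigr => k _; apply: eq_bigr => l _; case: ifP => // _.
rewrite !mulnb (alt_sym b_alt (e l) (e k)) mulrn_addb ?alt_char2 //.
by rewrite andbC [X in _ (+) X]andbC.
Qed.

Definition coord_count (k : nat) (w : word G) : nat := count (fun a => coord bs k a.1) w.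

Definition coord_count2 (k l : nat) (w : word G) : nat :=
  count (fun a => coord bs k a.1 && coord bs l a.1) w.

Lemma coord_count2_diag k w : coord_count2 k k w = coord_count k w.
Proof. by apply: eq_count => a; rewrite andbb. Qed.

Lemma spanned_letter_sum (w : word G) :
  {in w, forall a, spanned bs a.1} -> spanned bs (letter_sum w).
Proof.
elim: w => [|a w IH] w_span; first by rewrite /letter_sum big_nil; apply: spanned0.
rewrite letter_sum_cons; apply: spannedD; first by apply: w_span; rewrite mem_head.
by apply: IH => c cw; apply: w_span; rewrite inE cw orbT.
Qed.

Lemma coord_letter_sum k (w : word G) : {in w, forall a, spanned bs a.1} ->
  coord bs k (letter_sum w) = odd (coord_count k w).
Proof.
elim: w => [|a w IH] w_span; first by rewrite /letter_sum big_nil coord0.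
have w'_span : {in w, forall a, spanned bs a.1}.
  by move=> c cw; apply: w_span; rewrite inE cw orbT.
have a_span : spanned bs a.1 by apply: w_span; rewrite mem_head.
rewrite letter_sum_cons (coordD k a_span (spanned_letter_sum w'_span)) IH //.
by rewrite /coord_count /= oddD oddb.
Qed.

Lemma wedge_eval_coord (A : zmodType) (b : G -> G -> A) (w : word G) : alternating b ->
  {in w, forall a, spanned bs a.1} ->
  wedge_eval b w = \sum_(0 <= k < n) \sum_(0 <= l < n)
    (if (k < l)%N then b (e k) (e l) *+
       odd (coord_count k w * coord_count l w + coord_count2 k l w) else 0).
Proof.
move=> b_alt; elim: w => [|a w IH] w_span.
  rewrite /wedge_eval big_nil big1 // => k _; rewrite big1 // => l _.
  by case: ifP; rewrite ?mulr0n.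
have w'_span : {in w, forall a, spanned bs a.1}.
  by move=> c cw; apply: w_span; rewrite inE cw orbT.
have a_span : spanned bs a.1 by apply: w_span; rewrite mem_head.
rewrite wedge_eval_cons // IH // (alt_coord_expand b_alt a_span (spanned_letter_sum w'_span)).
rewrite -big_split; apply: eq_bigr => k _; rewrite -big_split; apply: eq_bigr => l _ /=.
case: ifP => _; last by rewrite addr0.
rewrite mulrn_addb ?alt_char2 // !coord_letter_sum //; congr (_ *+ _).
rewrite /coord_count /coord_count2 /= !oddD !oddM !oddD !oddb.
by case: (coord bs k a.1); case: (coord bs l a.1); do 3!case: (odd _).
Qed.

Lemma weq_phiw_of_coord_count2 (u v : word G) :
  {in u, forall a, spanned bs a.1} -> {in v, forall a, spanned bs a.1} ->
  odd (size u) = odd (size v) ->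
  (forall k l, (k <= l < n)%N -> odd (coord_count2 k l u) = odd (coord_count2 k l v)) ->
  weq (phiw u) (phiw v).
Proof.
move=> u_span v_span same_size same_count2.
have same_count k : (k < n)%N -> odd (coord_count k u) = odd (coord_count k v).
  by move=> kn; rewrite -!coord_count2_diag same_count2 ?leqnn.
apply/weq_phiwP; split=> //.
  rewrite (coord_expand (spanned_letter_sum u_span)).
  rewrite (coord_expand (spanned_letter_sum v_span)).
  by apply: eq_big_nat => k /andP[_ kn]; rewrite !coord_letter_sum // same_count.
move=> A b b_alt; rewrite !wedge_eval_coord //.
apply: eq_big_nat => k /andP[_ kn]; apply: eq_big_nat => l /andP[_ ln].
case: ifP => // kl; congr (_ *+ _).
by rewrite !oddD !oddM !same_count // same_count2 // ltnW.
Qed.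

(* An alternating form over F_2 that isolates the (k, l) term of wedge_eval_coord. *)
Definition coord_form (k l : nat) (x y : G) : 'Z_2 :=
  ((coord bs k x && coord bs l y) (+) (coord bs l x && coord bs k y))%:R.

Lemma coord_form_alternating k l : generates (fun x => x \in bs) ->
  alternating (coord_form k l).
Proof.
move=> bs_gen; split=> [h x y | g x y | g]; last by rewrite /coord_form andbC addbb.
  rewrite /coord_form !(coordD _ (bs_gen x) (bs_gen y)) -natr_addb_Z2.
  by congr (_%:R); do 6!case: (coord _ _ _).
rewrite /coord_form !(coordD _ (bs_gen x) (bs_gen y)) -natr_addb_Z2.
by congr (_%:R); do 6!case: (coord _ _ _).
Qed.

Lemma coord_form_nth k l k' l' : (k < l)%N -> (l < n)%N -> (k' < l')%N -> (l' < n)%N ->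
  coord_form k l (e k') (e l') = ((k' == k) && (l' == l))%:R.
Proof.
move=> kl ln k'l' l'n; have kn := ltn_trans kl ln; have k'n := ltn_trans k'l' l'n.
rewrite /coord_form !coord_nth //; congr (_%:R).
case: (eqVneq k' l) k'l' => [-> ll' | _ _]; last by rewrite addbF.
by rewrite (gtn_eqF kl) (gtn_eqF (ltn_trans kl ll')).
Qed.

Lemma wedge_eval_coord_form k l (w : word G) : generates (fun x => x \in bs) ->
  (k < l < n)%N ->
  wedge_eval (coord_form k l) w =
    (odd (coord_count k w * coord_count l w + coord_count2 k l w))%:R.
Proof.
move=> bs_gen /andP[kl ln]; have kn := ltn_trans kl ln.
rewrite wedge_eval_coord; last 2 first.
- exact: coord_form_alternating.
- by move=> a _; apply: bs_gen.
rewrite (sum_nat_delta kn) => [|k' _ /negbTE k'k]; last first.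
  apply: big1_seq => l' /andP[_]; rewrite mem_index_iota => /andP[_ l'n].
  by case: ifP => // k'l'; rewrite coord_form_nth //; move: k'k => /= ->; rewrite mul0rn.
rewrite (sum_nat_delta ln) => [|l' l'n /negbTE l'l]; last first.
  by case: ifP => // kl'; rewrite coord_form_nth //; move: l'l => /= ->; rewrite andbF mul0rn.
by rewrite kl coord_form_nth // !eqxx.
Qed.

Lemma coord_count2_odd_of_weq (u v : word G) k l : generates (fun x => x \in bs) ->
  (k < l < n)%N -> weq (phiw u) (phiw v) ->
  odd (coord_count2 k l u) = odd (coord_count2 k l v).
Proof.
move=> bs_gen kln /weq_phiwP[same_sum _ same_eval].
have same_count j : odd (coord_count j u) = odd (coord_count j v).
  by rewrite -!coord_letter_sum ?same_sum // => a _; apply: bs_gen.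
have := same_eval _ _ (coord_form_alternating k l bs_gen).
rewrite !wedge_eval_coord_form // => /natr_Z2_inj.
by rewrite !oddD !oddM !same_count => /addbI.
Qed.

End Coordinates.

Lemma phi_injective_of_independent (T : {pred G}) :
  f2_independent [pred x | (x \in T) && (x != 0)] -> phi_injective T.
Proof.
move=> T_ind u v uT vT /weq_phiwP[same_sum same_size _].
apply: ueq_of_letter_count => //.
pose nz (w : word G) := [seq x <- map fst w | x != 0].
have nz_count w x : x != 0 -> count_mem x (nz w) = letter_count x w.
  by move=> x0; rewrite count_filter; apply: eq_count => y /=; case: eqP => // ->.
have nz_T w : word_in T w -> all (fun x => x \in [pred x | (x \in T) && (x != 0)]) (nz w).
  move=> wT; apply/allP => x; rewrite mem_filter inE => /andP[-> /mapP[a aw ->]].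
  by rewrite (allP wT a aw).
have nz_sum w : \sum_(x <- nz w) x = letter_sum w.
  by rewrite big_filter big_mkcond big_map; apply: eq_bigr => a _; case: eqP => // ->.
have same_nz : forall x, odd (count_mem x (nz u)) = odd (count_mem x (nz v)).
  by apply: (f2_independent_count_odd T_ind (nz_T u uT) (nz_T v vT)); rewrite !nz_sum.
move=> x; case: (eqVneq x 0) => [->|x0]; last by rewrite -!nz_count // same_nz.
have size_split w : size w = (letter_count 0 w + size (nz w))%N.
  by rewrite size_filter /letter_count -(size_map fst) -(count_predC (pred1 0)).
move: same_size; rewrite !size_split !oddD (odd_size_count_mem same_nz).
by move/addIb.
Qed.

Lemma not_phi_injective_of_large (T : {pred G}) (bs s : seq G) :
  f2_independent (fun x => x \in bs) -> uniq bs -> 0 \in T ->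
  uniq s -> all (fun x => (x \in T) && (x != 0)) s -> {in s, forall x, spanned bs x} ->
  ((size bs * (size bs).+1) %/ 2 < size s)%N -> ~ phi_injective T.
Proof.
move=> bs_ind bs_uniq T0 s_uniq sT s_span large phi_inj.
pose r := 0 :: s; pose n := size bs.
have r_uniq : uniq r.
  by rewrite /= s_uniq andbT; apply/negP => /(allP sT) /andP[_]; rewrite eqxx.
pose word_of (m : (size r).-tuple bool) : word G := [seq (x, false) | x <- mask m r].
pose J := {p : 'I_n * 'I_n | (p.1 <= p.2)%N}.
pose stats m : bool * {ffun J -> bool} :=
  (odd (size (word_of m)),
   [ffun p : J => odd (coord_count2 bs (val p).1 (val p).2 (word_of m))]).
have /injectivePn[m1 [m2 m12 same_stats]] : ~~ injectiveb stats.
  apply/negP => /injectiveP /leq_card.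
  rewrite card_tuple card_prod card_ffun !card_bool card_ordered_pairs -expnS leq_exp2l //.
  by rewrite /= ltnS leqNgt large.
have word_span m : {in word_of m, forall a, spanned bs a.1}.
  move=> a /mapP[x /mem_mask] /[swap] -> /=; rewrite inE => /orP[/eqP -> | xs].
    exact: spanned0.
  exact: s_span.
have word_T m : word_in T (word_of m).
  apply/allP => a /mapP[x /mem_mask] /[swap] -> /=; rewrite inE => /orP[/eqP -> // | xs].
  by case/andP: (allP sT x xs).
have : weq (phiw (word_of m1)) (phiw (word_of m2)).
  apply: (weq_phiw_of_coord_count2 bs_ind bs_uniq (word_span m1) (word_span m2)).
    by case: same_stats.
  move=> k l /andP[kl ln]; have kn : (k < n)%N := leq_ltn_trans kl ln.
  case: same_stats => _ /ffunP /(_ (exist _ (Ordinal kn, Ordinal ln) kl)).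
  by rewrite !ffunE.
move/(phi_inj _ _ (word_T m1) (word_T m2))/ueq_letter_count => same_count.
apply/negP: m12; rewrite negbK; apply/eqP/eq_from_tnth => i.
have := same_count (nth 0 r i).
have map_fst_word m : map fst (word_of m) = mask m r by rewrite -map_comp map_id.
rewrite /letter_count !map_fst_word !(count_mem_nth_mask 0 _ r_uniq (ltn_ord i)).
by rewrite !(tnth_nth false); case: (nth false m1 i); case: (nth false m2 i).
Qed.

Lemma f2_independent_sub (A B : {pred G}) :
  {subset A <= B} -> f2_independent B -> f2_independent A.
Proof.
move=> AB B_ind s s_uniq sA; apply: B_ind => //.
by apply/allP => x /(allP sA); apply: AB.
Qed.

Lemma f2_independent_nil : f2_independent (fun x : G => x \in [::]).
Proof. by case. Qed.

Lemma f2_independent_cons (bs : seq G) x : f2_independent (fun y => y \in bs) ->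
  ~ spanned bs x -> f2_independent (fun y => y \in x :: bs).
Proof.
move=> bs_ind x_span s s_uniq sxbs sum0; case xs : (x \in s).
  case: x_span; exists (rem x s); split.
    apply/allP => y; rewrite mem_rem_uniq // => /andP[yx ys].
    by have := allP sxbs y ys; rewrite inE (negbTE yx).
  move: sum0; rewrite (perm_big _ (perm_to_rem xs)) big_cons => /eqP.
  by rewrite addr_eq0 oppr_char2 => /eqP.
apply: bs_ind => //; apply/allP => y ys; move: (allP sxbs y ys); rewrite inE.
by case: eqP => [yx|//]; rewrite -yx ys in xs.
Qed.

Lemma uniq_cons_not_spanned (bs : seq G) x : uniq bs -> ~ spanned bs x -> uniq (x :: bs).
Proof. by move=> bs_uniq x_span /=; rewrite bs_uniq andbT; apply/negP => /spanned_mem. Qed.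

Lemma nonzero_mem_small_dim (bs : seq G) : (size bs <= 1)%N ->
  generates (fun x => x \in bs) -> forall g, g != 0 -> g \in bs.
Proof.
case: bs => [|e [|]] // _ bs_gen g; have [s [sbs ->]] := bs_gen g.
  by case: s sbs => [|x s] //= _; rewrite big_nil eqxx.
have -> : s = nseq (size s) e.
  by apply/all_pred1P; apply/allP => x /(allP sbs); rewrite inE.
by rewrite big_nseq iter_addr_0 mulrn_char2; case: (odd _); rewrite ?eqxx // mem_head.
Qed.

Lemma phi_injective_dim2 (T : {pred G}) (bs : seq G) :
  f2_independent (fun x => x \in bs) -> uniq bs -> size bs = 2%N ->
  generates (fun x => x \in bs) -> phi_injective T.
Proof.
move=> bs_ind bs_uniq bs_size bs_gen u v uT vT same_phi.
have same_count2 : odd (coord_count2 bs 0 1 u) = odd (coord_count2 bs 0 1 v).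
  by apply: (coord_count2_odd_of_weq bs_ind bs_uniq bs_gen _ same_phi); rewrite bs_size.
have /weq_phiwP[same_sum same_size _] := same_phi.
have same_count k : odd (coord_count bs k u) = odd (coord_count bs k v).
  by rewrite -!(coord_letter_sum bs_ind) ?same_sum // => a _; apply: bs_gen.
pose c k g := coord bs k g.
apply: ueq_of_letter_count => // y.
have count_coord (w : word G) :
    letter_count y w = count (fun a => (c 0%N a.1 == c 0%N y) && (c 1%N a.1 == c 1%N y)) w.
  rewrite /letter_count count_map; apply: eq_count => a /=.
  apply/eqP/andP => [->|[/eqP c0 /eqP c1]] //.
  rewrite (coord_expand bs_ind bs_uniq (bs_gen a.1)) (coord_expand bs_ind bs_uniq (bs_gen y)).
  by move: c0 c1; rewrite bs_size /index_iota /= !big_cons !big_nil /c => -> ->.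
rewrite !count_coord !(odd_count_andeq (fun a : G * bool => c 0%N a.1) (fun a => c 1%N a.1)).
by rewrite same_size -!/(coord_count _ _ _) -!/(coord_count2 _ _ _ _) !same_count same_count2.
Qed.

Lemma exists_independent3 : ~ (exists n, (n <= 2)%N /\ has_dim G n) ->
  exists bs : seq G, [/\ f2_independent (fun x => x \in bs), uniq bs & size bs = 3%N].
Proof.
move=> not_small.
have extend bs : f2_independent (fun x => x \in bs) -> uniq bs -> (size bs <= 2)%N ->
    exists x, ~ spanned bs x.
  move=> bs_ind bs_uniq bs_size; apply: NNPP => all_spanned; apply: not_small.
  exists (size bs); split=> //; exists bs; split=> //; split=> // g.
  by apply: NNPP => g_span; apply: all_spanned; exists g.
have [a a_span] := extend [::] f2_independent_nil isT isT.
have ind1 := f2_independent_cons f2_independent_nil a_span.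
have uniq1 := uniq_cons_not_spanned (bs := [::]) isT a_span.
have [b b_span] := extend _ ind1 uniq1 isT.
have ind2 := f2_independent_cons ind1 b_span; have uniq2 := uniq_cons_not_spanned uniq1 b_span.
have [c c_span] := extend _ ind2 uniq2 isT.
exists [:: c; b; a]; split=> //.
- exact: f2_independent_cons ind2 c_span.
- exact: uniq_cons_not_spanned uniq2 c_span.
Qed.

Lemma not_phi_injective_of_independent3 (T : {pred G}) (bs : seq G) :
  (forall g, g \in T) -> f2_independent (fun x => x \in bs) -> uniq bs ->
  size bs = 3%N -> ~ phi_injective T.
Proof.
move=> T_full bs_ind bs_uniq bs_size.
pose f (m : 3.-tuple bool) : G := \sum_(y <- mask m bs) y.
have mask_bs m : all (fun x => x \in bs) (mask m bs) by apply/allP => x /mem_mask.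
have f_inj : injective f.
  move=> m1 m2 f12; apply: eq_from_tnth => i; rewrite !(tnth_nth false).
  have i_bs : (i < size bs)%N by rewrite bs_size.
  rewrite -[nth false m1 i]oddb -[nth false m2 i]oddb.
  rewrite -(count_mem_nth_mask 0 m1 bs_uniq i_bs) -(count_mem_nth_mask 0 m2 bs_uniq i_bs).
  by apply: (f2_independent_count_odd bs_ind); rewrite ?mask_bs.
set l := [seq f m | m <- enum {: 3.-tuple bool}].
have l_uniq : uniq l by rewrite map_inj_uniq ?enum_uniq.
have l0 : (0 : G) \in l.
  by apply/mapP; exists [tuple of nseq 3 false]; rewrite ?mem_enum // /f mask_false big_nil.
apply: (not_phi_injective_of_large (s := [seq x <- l | x != 0]) bs_ind bs_uniq (T_full 0)).
- by rewrite filter_uniq.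
- by apply/allP => x; rewrite mem_filter T_full andbC => /andP[].
- move=> x; rewrite mem_filter => /andP[_ /mapP[m _ ->]].
  by exists (mask m bs); rewrite mask_bs.
have l_size : size l = 8%N by rewrite size_map -cardE card_tuple card_bool.
have count7 : count (fun x => x != 0) l = 7%N.
  by apply: succn_inj; rewrite -l_size -(count_predC (pred1 0) l) count_uniq_mem // l0.
by rewrite size_filter count7 bs_size.
Qed.

Lemma phi_injective_full (T : {pred G}) : (forall g, g \in T) ->
  phi_injective T <-> exists n, (n <= 2)%N /\ has_dim G n.
Proof.
move=> T_full; split=> [phi_inj | [n [n_le2 [bs [bs_uniq bs_size [bs_ind bs_gen]]]]]].
  apply: NNPP => not_small; have [bs [bs_ind bs_uniq bs_size]] := exists_independent3 not_small.
  exact: not_phi_injective_of_independent3 T_full bs_ind bs_uniq bs_size phi_inj.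
case: (leqP n 1) => [n_le1 | n_gt1].
  apply: phi_injective_of_independent; apply: f2_independent_sub bs_ind => x /andP[_].
  by apply: nonzero_mem_small_dim; rewrite ?bs_size.
apply: phi_injective_dim2 bs_ind bs_uniq _ bs_gen.
by rewrite bs_size; apply/eqP; rewrite eqn_leq n_le2.
Qed.

End ElemAbelian2.

Theorem corollary4p5 (G : zmodType) (T : {pred G})
    (hG : elem_abelian2 G) (h0 : 0 \in T) (hgen : generates T) :
  (is_basis [pred x | (x \in T) && (x != 0)] -> phi_injective T)
  /\ (forall (n : nat) (s : seq G), has_dim G n -> uniq s ->
        all (fun x => (x \in T) && (x != 0)) s ->
        ((n * n.+1) %/ 2 < size s)%N -> ~ phi_injective T)
  /\ ((forall g : G, g \in T) ->
        (phi_injective T <-> exists n : nat, (n <= 2)%N /\ has_dim G n)).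
Proof.
split; [|split].
- by case=> T_ind _; apply: phi_injective_of_independent.
- move=> n s [bs [bs_uniq <- [bs_ind bs_gen]]] s_uniq sT large.
  exact: (not_phi_injective_of_large hG bs_ind bs_uniq h0 s_uniq sT (fun x _ => bs_gen x)).
- exact: phi_injective_full.
Qed.
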